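(* Let $\Omega$ be a metric space, $\mathcal{FV}(\Omega)$ a dom-space and $T\colon\mathcal{FV}(\Omega)\to\mathcal{CC}(\Omega)$ continuous and linear. Then the map $\delta\circ T\colon\Omega\to\mathcal{FV}(\Omega)'_\gamma$, $x\mapsto\delta_x\circ T$, is well-defined and Cauchy continuous.
   Context: $\mathbb{K}\in\{\mathbb{R},\mathbb{C}\}$. A map between metric/uniform spaces is Cauchy continuous if it maps Cauchy sequences to Cauchy sequences; $\mathcal{CC}(\Omega)$ is the space of Cauchy continuous $\mathbb{K}$-valued functions on $\Omega$ with the topology of uniform convergence on precompact subsets of $\Omega$. $\mathcal{FV}(\Omega)'_\gamma$: dual with the topology of uniform convergence on precompact subsets. $(\delta_x\circ T)(f):=T(f)(x)$. Framework: $J,M$ non-empty index sets, $(\omega_m)_{m\in M}$ non-empty sets, $\nu_{j,m}\colon\omega_m\to[0,\infty)$ such that for all $m$, $x\in\omega_m$ some $\nu_{j,m}(x)>0$; $\operatorname{AP}(\Omega)\subset\mathbb{K}^\Omega$ a linear subspace; $T_m\colon\operatorname{dom}T_m\to\mathbb{K}^{\omega_m}$ linear maps on linear subspaces of $\mathbb{K}^\Omega$; $\mathcal{FV}(\Omega):=\{f\in\operatorname{AP}(\Omega)\cap\bigcap_m\operatorname{dom}T_m: |f|_{j,m}:=\sup_{x\in\omega_m}|T_m(f)(x)|\nu_{j,m}(x)<\infty\ \forall j,m\}$ with these seminorms. It is a dom-space if it is Hausdorff, the seminorms are directed and every $\delta_x\colon f\mapsto f(x)$ belongs to $\mathcal{FV}(\Omega)'$.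 *)

From HB Require Import structures.
From mathcomp Require Import all_boot all_order all_algebra.
From mathcomp Require Import all_classical all_reals all_analysis.
From mathcomp.real_closed Require Import complex.
Set Implicit Arguments. Unset Strict Implicit. Unset Printing Implicit Defensive.
Import Order.TTheory GRing.Theory Num.Theory.
Local Open Scope classical_set_scope.
Local Open Scope ring_scope.

Definition Kscal (R : realType) (b : bool) : numFieldType :=
  if b then (R : numFieldType) else (R[i] : numFieldType).

Definition knorm (R : realType) (b : bool) : Kscal R b -> R :=
  match b as b0 return Kscal R b0 -> R with
  | true => fun x : R => `|x|
  | false => fun z : R[i] => ComplexField.Normc.normc z
  end.

Record FVdata (R : realType) (b : bool) (Omega : Type) := {
  Jidx : Type;
  Midx : Type;
  om : Midx -> Type;
  nu : Jidx -> forall m : Midx, om m -> R;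
  AP : (Omega -> Kscal R b) -> Prop;
  domT : Midx -> (Omega -> Kscal R b) -> Prop;
  Tm : forall m : Midx, (Omega -> Kscal R b) -> om m -> Kscal R b
}.
Arguments Jidx {R b Omega} d : rename.
Arguments Midx {R b Omega} d : rename.
Arguments om {R b Omega} d m : rename.
Arguments nu {R b Omega} d j m x : rename.
Arguments AP {R b Omega} d f : rename.
Arguments domT {R b Omega} d m f : rename.
Arguments Tm {R b Omega} d m f x : rename.

Section Framework.
Variables (R : realType) (b : bool) (Omega : Type).
Local Notation K := (Kscal R b).
Variable D : FVdata R b Omega.

Definition fzero : Omega -> K := fun _ => 0.
Definition fadd (f g : Omega -> K) : Omega -> K := fun x => f x + g x.
Definition fsub (f g : Omega -> K) : Omega -> K := fun x => f x - g x.
Definition fscale (a : K) (f : Omega -> K) : Omega -> K := fun x => a * f x.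

Definition lin_subspace (P : (Omega -> K) -> Prop) :=
  P fzero /\ (forall f g, P f -> P g -> P (fadd f g)) /\
  (forall a f, P f -> P (fscale a f)).

Definition FVframework : Prop :=
  inhabited (Jidx D) /\ inhabited (Midx D) /\
  (forall m, inhabited (om D m)) /\
  (forall j m x, 0 <= nu D j m x) /\
  (forall m x, exists j, 0 < nu D j m x) /\
  lin_subspace (AP D) /\
  (forall m, lin_subspace (domT D m)) /\
  (forall m f g, domT D m f -> domT D m g ->
     Tm D m (fadd f g) = (fun x => Tm D m f x + Tm D m g x)) /\
  (forall m a f, domT D m f -> Tm D m (fscale a f) = (fun x => a * Tm D m f x)).

Definition inFV (f : Omega -> K) : Prop :=
  AP D f /\ (forall m, domT D m f) /\
  (forall j m, exists C : R, forall x : om D m,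
     knorm (Tm D m f x) * nu D j m x <= C).

Definition snorm (j : Jidx D) (m : Midx D) (f : Omega -> K) : R :=
  sup [set knorm (Tm D m f x) * nu D j m x | x in [set: om D m]].

Definition snorm_max (s : seq (Jidx D * Midx D)) (f : Omega -> K) : R :=
  \big[Num.max/0]_(p <- s) snorm p.1 p.2 f.

(* phi belongs to the (topological) dual FV(Omega)': phi is linear on
   FV(Omega) and continuous w.r.t. the locally convex topology generated by
   the seminorms |.|_{j,m}. *)
Definition in_dual (phi : (Omega -> K) -> K) : Prop :=
  (forall f g, inFV f -> inFV g -> phi (fadd f g) = phi f + phi g) /\
  (forall a f, inFV f -> phi (fscale a f) = a * phi f) /\
  (exists (s : seq (Jidx D * Midx D)) (C : R), forall f, inFV f ->
     knorm (phi f) <= C * snorm_max s f).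

Definition dom_space : Prop :=
  (forall f, inFV f -> (forall j m, snorm j m f = 0) -> f = fzero) /\
  (forall j1 m1 j2 m2, exists j m (C : R), 0 < C /\ forall f, inFV f ->
     Num.max (snorm j1 m1 f) (snorm j2 m2 f) <= C * snorm j m f) /\
  (forall x : Omega, in_dual (fun f => f x)).

Definition FV_precompact (B : set (Omega -> K)) : Prop :=
  B `<=` inFV /\
  forall (s : seq (Jidx D * Midx D)) (e : R), 0 < e ->
    exists (n : nat) (g : nat -> (Omega -> K)),
      (forall i, (i < n)%N -> inFV (g i)) /\
      forall f, B f -> exists i, (i < n)%N /\ snorm_max s (fsub f (g i)) < e.

End Framework.

Section MetricNotions.
Variables (R : realType) (b : bool) (Omega : pseudoMetricType R).
Local Notation K := (Kscal R b).

Definition K_cauchy (v : nat -> K) : Prop :=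
  forall e : R, 0 < e -> exists N, forall n k, (N <= n)%N -> (N <= k)%N ->
    knorm (v n - v k) < e.

Definition cauchy_continuous (g : Omega -> K) : Prop :=
  forall u : nat -> Omega, cauchy (u @ \oo) -> K_cauchy (g \o u).

End MetricNotions.

Section Precompact.
Variables (R : realType) (Omega : pseudoMetricType R).
Definition tot_bounded (A : set Omega) : Prop :=
  forall e : R, 0 < e -> exists (n : nat) (y : nat -> Omega),
    forall x, A x -> exists i, (i < n)%N /\ ball (y i) e x.

End Precompact.

From HB Require Import structures.
From mathcomp Require Import all_boot all_order all_algebra.
From mathcomp Require Import all_classical all_reals all_analysis.
From mathcomp.real_closed Require Import complex.
From mathcomp Require Import lra.
Import Order.TTheory GRing.Theory Num.Theory.
Local Open Scope classical_set_scope.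
Local Open Scope ring_scope.

(** A single point is precompact, so continuity of [T] bounds [f |-> T f x]
    by finitely many seminorms: [delta_x o T] lies in the dual.  The range of a
    Cauchy sequence [u] is precompact too, so a single bound
    [|T f (u n)| <= C p(f)], with [p] a maximum of finitely many seminorms,
    holds uniformly in [n].  A precompact [B] has a finite [p]-net
    [g_1, ..., g_m]; each [T g_i] is Cauchy continuous, so the [T g_i (u n)]
    are Cauchy, uniformly in [i], and an [e/3]-argument makes [T f (u n)]
    Cauchy uniformly in [f] in [B]. *)

Section ScalarNorm.
Context {R : realType} {b : bool}.
Local Notation K := (Kscal R b).

Lemma knorm_ge0 (x : K) : 0 <= knorm x.
Proof. by case: b x => [x|[x y]] /=; [exact: normr_ge0 | exact: sqrtr_ge0]. Qed.

Lemma knormD (x y : K) : knorm (x + y) <= knorm x + knorm y.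
Proof. by case: b x y => x y /=; [exact: ler_normD | exact: le_normcD]. Qed.

Lemma knormN (x : K) : knorm (- x) = knorm x.
Proof. by case: b x => x /=; [exact: normrN | exact: normcN]. Qed.

Lemma knormM (x y : K) : knorm (x * y) = knorm x * knorm y.
Proof.
by case: b x y => x y /=; [exact: normrM | exact: ComplexField.Normc.normcM].
Qed.

Lemma knormB_le3 (x y z w : K) :
  knorm (x - w) <= knorm (x - y) + knorm (y - z) + knorm (z - w).
Proof.
have -> : x - w = (x - y) + (y - z) + (z - w) by rewrite !addrA !subrK.
by rewrite (le_trans (knormD _ _)) // lerD2r knormD.
Qed.

End ScalarNorm.

Section FVSubspace.
Context {R : realType} {b : bool} {Omega : Type} {D : FVdata R b Omega}.
Hypothesis FW : FVframework D.

Lemma inFV_add {f g : Omega -> Kscal R b} :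
  inFV D f -> inFV D g -> inFV D (fadd f g).
Proof.
have [_ [_ [_ [nu_ge0 [_ [[_ [APD _]] [domT_sub [TmD _]]]]]]]] := FW : FVframework D.
move=> [APf [domf bf]] [APg [domg bg]]; split; first exact: APD.
split=> [m|j m]; first by have [_ [+ _]] := domT_sub m; apply.
have [[Cf HCf] [Cg HCg]] := (bf j m, bg j m).
exists (Cf + Cg) => x; rewrite TmD //.
rewrite (le_trans _ (lerD (HCf x) (HCg x))) //.
by rewrite -mulrDl ler_wpM2r ?knormD ?nu_ge0.
Qed.

Lemma inFV_scale {a : Kscal R b} {f : Omega -> Kscal R b} :
  inFV D f -> inFV D (fscale a f).
Proof.
have [_ [_ [_ [_ [_ [[_ [_ APZ]] [domT_sub [_ TmZ]]]]]]]] := FW : FVframework D.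
move=> [APf [domf bf]]; split; first exact: APZ.
split=> [m|j m]; first by have [_ [_ +]] := domT_sub m; apply.
have [C HC] := bf j m; exists (knorm a * C) => x.
by rewrite TmZ // knormM -mulrA ler_wpM2l ?knorm_ge0.
Qed.

Lemma fsubE (f g : Omega -> Kscal R b) : fsub f g = fadd f (fscale (-1) g).
Proof. by apply/funext => x; rewrite /fsub /fadd /fscale mulN1r. Qed.

Lemma inFV_sub {f g : Omega -> Kscal R b} :
  inFV D f -> inFV D g -> inFV D (fsub f g).
Proof. by move=> Ff Fg; rewrite fsubE; apply: inFV_add; last apply: inFV_scale. Qed.

End FVSubspace.

Lemma snorm_max_ge0 {R : realType} {b : bool} {Omega : Type}
    {D : FVdata R b Omega} (s : seq (Jidx D * Midx D)) (f : Omega -> Kscal R b) :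
  0 <= snorm_max s f.
Proof.
rewrite /snorm_max; elim: s => [|p s IH]; first by rewrite big_nil.
by rewrite big_cons le_max IH orbT.
Qed.

Section Precompactness.
Context {R : realType} {Omega : pseudoMetricType R}.

Lemma tot_bounded_set1 (x : Omega) : tot_bounded [set x].
Proof.
by move=> e e0; exists 1%N, (fun=> x) => _ ->; exists 0%N; split; last exact: ballxx.
Qed.

Lemma cauchy_tot_bounded_range (u : nat -> Omega) :
  cauchy (u @ \oo) -> tot_bounded (range u).
Proof.
move=> /cauchyP u_cauchy e e0; have [x [N _ uN_near_x]] := u_cauchy e e0.
exists N.+1, (fun i => if (i < N)%N then u i else x) => _ [m _ <-].
have [mN|Nm] := ltnP m N.
  by exists m; rewrite mN ltnW //; split; last exact: ballxx.
by exists N; rewrite ltnn ltnSn; split; last exact: uN_near_x.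
Qed.

End Precompactness.

Section UniformCauchy.
Context {R : realType} {b : bool}.
Local Notation K := (Kscal R b).

Definition K_unif_cauchy {A : Type} (B : set A) (v : A -> nat -> K) :=
  forall e : R, 0 < e -> exists N, forall n k, (N <= n)%N -> (N <= k)%N ->
    forall f, B f -> knorm (v f n - v f k) < e.

Lemma K_unif_cauchy_finite {m : nat} {v : nat -> nat -> K} :
  (forall i, (i < m)%N -> K_cauchy (v i)) ->
  K_unif_cauchy (fun i => (i < m)%N) v.
Proof.
move=> v_cauchy e e0.
have : forall i : 'I_m, \forall N \near \oo, forall n k, (N <= n)%N -> (N <= k)%N ->
    knorm (v i n - v i k) < e.
  move=> i; have [N HN] := v_cauchy i (ltn_ord i) e e0.
  by exists N => // N' NN' n k nN' kN'; apply: HN; apply: leq_trans NN' _.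
move=> /filter_forall[N _ /(_ N (leqnn N)) HN].
by exists N => n k nN kN i im; apply: (HN (Ordinal im)).
Qed.

Lemma K_unif_cauchy_approx {A : Type} (B : set A) (v : A -> nat -> K) :
  (forall e : R, 0 < e -> exists (m : nat) (g : nat -> A),
     (forall i, (i < m)%N -> K_cauchy (v (g i))) /\
     forall f, B f -> exists i, (i < m)%N /\ forall n, knorm (v f n - v (g i) n) < e) ->
  K_unif_cauchy B v.
Proof.
move=> approx e e0; have e30 : 0 < e / 3 by rewrite divr_gt0.
have [m [g [g_cauchy g_net]]] := approx _ e30.
have [N HN] := K_unif_cauchy_finite (v := v \o g) g_cauchy _ e30.
exists N => n k nN kN f Bf; have [i [im fi_close]] := g_net f Bf.
rewrite (le_lt_trans (knormB_le3 _ (v (g i) n) (v (g i) k) _)) //.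
have -> : e = e / 3 + e / 3 + e / 3 by lra.
rewrite -[v (g i) k - _]opprB knormN ?ltrD //.
exact: HN.
Qed.

End UniformCauchy.

Section DeltaT.
Context {R : realType} {b : bool} {Omega : pseudoMetricType R}.
Context {D : FVdata R b Omega} {T : (Omega -> Kscal R b) -> (Omega -> Kscal R b)}.
Hypothesis FW : FVframework D.
Hypothesis T_cauchy : forall f, inFV D f -> cauchy_continuous (T f).
Hypothesis T_add : forall f g, inFV D f -> inFV D g -> T (fadd f g) = fadd (T f) (T g).
Hypothesis T_scale : forall a f, inFV D f -> T (fscale a f) = fscale a (T f).
Hypothesis T_cont : forall A : set Omega, tot_bounded A ->
  exists (s : seq (Jidx D * Midx D)) (C : R), forall f, inFV D f ->
    forall x, A x -> knorm (T f x) <= C * snorm_max s f.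

Lemma T_sub f g : inFV D f -> inFV D g -> T (fsub f g) = fsub (T f) (T g).
Proof.
by move=> Ff Fg; rewrite !fsubE T_add ?T_scale //; apply: inFV_scale.
Qed.

Lemma delta_T_in_dual x : in_dual D (fun f => T f x).
Proof.
split=> [f g Ff Fg|]; first by rewrite T_add.
split=> [a f Ff|]; first by rewrite T_scale.
by have [s [C HC]] := T_cont _ (tot_bounded_set1 x); exists s, C => f Ff; apply: HC.
Qed.

Lemma delta_T_unif_cauchy (u : nat -> Omega) (B : set (Omega -> Kscal R b)) :
  cauchy (u @ \oo) -> FV_precompact D B -> K_unif_cauchy B (fun f n => T f (u n)).
Proof.
move=> u_cauchy [B_FV B_net]; apply: K_unif_cauchy_approx => e e0.
have [s [C HC]] := T_cont _ (cauchy_tot_bounded_range _ u_cauchy).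
have C1_gt0 : 0 < `|C| + 1 by rewrite ltr_pwDr.
have [m [g [g_FV g_net]]] := B_net s (e / (`|C| + 1)) (divr_gt0 e0 C1_gt0).
exists m, g; split=> [i im|f Bf]; first exact: T_cauchy (g_FV i im) u u_cauchy.
have [i [im fg_small]] := g_net f Bf; exists i; split=> // n.
have [Ff Fg] := (B_FV f Bf, g_FV i im).
have := HC _ (inFV_sub FW Ff Fg) (u n) (ex_intro2 _ _ n I erefl).
rewrite T_sub // => /le_lt_trans; apply.
rewrite (le_lt_trans (ler_wpM2r (snorm_max_ge0 _ _) (ler_norm C))) //.
rewrite (le_lt_trans (ler_wpM2l (normr_ge0 C) (ltW fg_small))) //.
by rewrite mulrCA gtr_pMr // ltr_pdivrMr // mul1r ltrDl.
Qed.

End DeltaT.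

Theorem lemma4p5 (R : realType) (b : bool) (Omega : pseudoMetricType R)
  (D : FVdata R b Omega)
  (T : (Omega -> Kscal R b) -> (Omega -> Kscal R b)) :
  (* Omega is a metric space *)
  hausdorff_space Omega ->
  (* FV(Omega) is a dom-space *)
  FVframework D -> dom_space D ->
  (* T : FV(Omega) -> CC(Omega) *)
  (forall f, inFV D f -> cauchy_continuous (T f)) ->
  (* T is linear *)
  (forall f g, inFV D f -> inFV D g -> T (fadd f g) = fadd (T f) (T g)) ->
  (forall a f, inFV D f -> T (fscale a f) = fscale a (T f)) ->
  (* T is continuous (CC(Omega) carries the topology of uniform convergence
     on precompact subsets of Omega) *)
  (forall A : set Omega, tot_bounded A ->
     exists (s : seq (Jidx D * Midx D)) (C : R), forall f, inFV D f ->
       forall x, A x -> knorm (T f x) <= C * snorm_max s f) ->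
  (* delta o T : Omega -> FV(Omega)'_gamma is well-defined ... *)
  (forall x : Omega, in_dual D (fun f => T f x)) /\
  (* ... and Cauchy continuous: it maps Cauchy sequences of Omega to Cauchy
     sequences of FV(Omega)'_gamma (uniform convergence on precompact sets) *)
  (forall u : nat -> Omega, cauchy (u @ \oo) ->
     forall B : set (Omega -> Kscal R b), FV_precompact D B ->
     forall e : R, 0 < e -> exists N : nat, forall n k,
       (N <= n)%N -> (N <= k)%N ->
       forall f, B f -> knorm (T f (u n) - T f (u k)) < e).
Proof.
move=> _ FW _ T_cauchy T_add T_scale T_cont; split=> [x|u u_cauchy B B_pc].
  exact: (delta_T_in_dual T_add T_scale T_cont x).
exact: (delta_T_unif_cauchy FW T_cauchy T_add T_scale T_cont u B u_cauchy B_pc).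
Qed.
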